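(* Let $F\in\mathcal{F}^n$ with radial function $\rho$. Then for each $x\in\mathbf{S}^n$ and each $N(x)\in\alpha_F(x)$ there exists a unique $v(x)\in\partial\rho(x)$ such that $$N(x)=\frac{-v(x)+\rho(x)x}{\sqrt{|v(x)|^2+\rho^2(x)}},$$ and $$\alpha_F(x)=\left\{\frac{-v(x)+\rho(x)x}{\sqrt{|v(x)|^2+\rho^2(x)}}:\ v(x)\in\partial\rho(x)\right\}.$$
   Context: $\mathbf{S}^n$ is the unit sphere in $\mathbb{R}^{n+1}$, $n\ge1$, centered at the origin $\mathcal{O}$. $\mathcal{F}^n$ is the set of boundaries of compact convex sets in $\mathbb{R}^{n+1}$ containing $\mathcal{O}$ in their interior; for $F\in\mathcal{F}^n$ its radial function $\rho(x)$ is the distance from $\mathcal{O}$ to the point where the ray in direction $x\in\mathbf{S}^n$ meets $F$, and its generalized Gauss map $\alpha_F(x)$ is the set of outward unit normals of all supporting hyperplanes to $F$ at $\rho(x)x$. For $f\in C(\mathbf{S}^n)$ and $x_0\in\mathbf{S}^n$, with $T\mathbf{S}^n_{x_0}=\{v\in\mathbb{R}^{n+1}:\langle v,x_0\rangle=0\}$, the subdifferential is $\partial f(x_0)=\{v\in T\mathbf{S}^n_{x_0}: f(x)\langle -v+f(x_0)x_0,x\rangle\le f^2(x_0)\ \forall x\in\mathbf{S}^n\}$. *)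

From HB Require Import structures.
From mathcomp Require Import all_boot all_order all_algebra.
From mathcomp Require Import all_classical all_reals all_analysis.
Set Implicit Arguments. Unset Strict Implicit. Unset Printing Implicit Defensive.
Import Order.TTheory GRing.Theory Num.Theory.
Import numFieldNormedType.Exports.
Local Open Scope classical_set_scope.
Local Open Scope ring_scope.

(* Vectors of R^(n+1) are row vectors 'rV[R]_(n.+1), with the product topology. *)

Definition dotv {R : realType} {k : nat} (u v : 'rV[R]_k) : R :=
  \sum_(i < k) u ord0 i * v ord0 i.

Definition enorm {R : realType} {k : nat} (v : 'rV[R]_k) : R :=
  Num.sqrt (dotv v v).

Definition unit_sphere (R : realType) (n : nat) : set 'rV[R]_(n.+1) :=
  [set x | enorm x = 1].
Arguments unit_sphere : clear implicits.

Definition convex_set_of {R : realType} {k : nat} (K : set 'rV[R]_k) : Prop :=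
  forall x y t, K x -> K y -> 0 <= t <= 1 -> K (t *: x + (1 - t) *: y).

Definition convex_body0 {R : realType} {k : nat} (K : set 'rV[R]_k) : Prop :=
  compact K /\ convex_set_of K /\ (interior K) 0.

Definition boundary {R : realType} {k : nat} (K : set 'rV[R]_k) : set 'rV[R]_k :=
  closure K `\` interior K.

(* rho is the radial function of F = boundary K: for x in S^n, rho x >= 0 and
   rho x * x is the point where the ray in direction x meets F. *)
Definition is_radial_function {R : realType} {n : nat}
  (K : set 'rV[R]_(n.+1)) (rho : 'rV[R]_(n.+1) -> R) : Prop :=
  forall x, unit_sphere R n x -> 0 <= rho x /\ boundary K (rho x *: x).

(* Generalized Gauss map: outward unit normals of supporting hyperplanes to F
   (equivalently to the convex set K bounded by F) at the point p = rho x * x. *)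
Definition gauss_map {R : realType} {n : nat}
  (K : set 'rV[R]_(n.+1)) (rho : 'rV[R]_(n.+1) -> R) (x : 'rV[R]_(n.+1))
  : set 'rV[R]_(n.+1) :=
  [set N | enorm N = 1 /\ forall y, K y -> dotv N y <= dotv N (rho x *: x)].

Definition subdiff {R : realType} {n : nat}
  (f : 'rV[R]_(n.+1) -> R) (x0 : 'rV[R]_(n.+1)) : set 'rV[R]_(n.+1) :=
  [set v | dotv v x0 = 0 /\
     forall x, unit_sphere R n x -> f x * dotv (- v + f x0 *: x0) x <= f x0 ^+ 2].

Definition normal_of {R : realType} {k : nat} (r : R) (x v : 'rV[R]_k) : 'rV[R]_k :=
  (Num.sqrt (enorm v ^+ 2 + r ^+ 2))^-1 *: (- v + r *: x).

(* For a unit vector x put r := rho x > 0.  On vectors v orthogonal to x, the map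
   v |-> (-v + r x) / sqrt(|v|^2 + r^2) has the explicit inverse
   N |-> r x - (r / <N, x>) N on unit vectors with <N, x> > 0.  Since every y in K
   is a nonnegative multiple t z of a unit vector z with t <= rho z, the
   supporting-hyperplane inequality <N, y> <= <N, r x> for y in K is equivalent to
   the same inequality at the boundary points y = rho z z only, and after
   clearing the positive factor <N, x> / r this is exactly the subdifferential
   inequality for v.  Positivity of <N, x> comes from 0 lying in the interior of K. *)

From HB Require Import structures.
From mathcomp Require Import all_boot all_order all_algebra.
From mathcomp Require Import all_classical all_reals all_analysis.
From mathcomp Require Import ring.
Import Order.TTheory GRing.Theory Num.Theory.
Import numFieldNormedType.Exports.
Local Open Scope classical_set_scope.
Local Open Scope ring_scope.

Set Implicit Arguments. Unset Strict Implicit.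

Section InnerProduct.
Context {R : realType} {k : nat}.
Implicit Types (a : R) (u v w : 'rV[R]_k).

Lemma dotvC u v : dotv u v = dotv v u.
Proof. by apply: eq_bigr => i _; rewrite mulrC. Qed.

Lemma dotvDl u w v : dotv (u + w) v = dotv u v + dotv w v.
Proof. by rewrite /dotv -big_split; apply: eq_bigr => i _; rewrite !mxE mulrDl. Qed.

Lemma dotvZl a u v : dotv (a *: u) v = a * dotv u v.
Proof. by rewrite /dotv mulr_sumr; apply: eq_bigr => i _; rewrite !mxE mulrA. Qed.

Lemma dotvNl u v : dotv (- u) v = - dotv u v.
Proof. by rewrite -scaleN1r dotvZl mulN1r. Qed.

Lemma dotvDr u w v : dotv v (u + w) = dotv v u + dotv v w.
Proof. by rewrite dotvC dotvDl !(dotvC v). Qed.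

Lemma dotvZr a u v : dotv v (a *: u) = a * dotv v u.
Proof. by rewrite dotvC dotvZl dotvC. Qed.

Lemma dotvNr u v : dotv v (- u) = - dotv v u.
Proof. by rewrite dotvC dotvNl dotvC. Qed.

Lemma dotv0r v : dotv v 0 = 0.
Proof. by rewrite /dotv big1 // => i _; rewrite mxE mulr0. Qed.

Lemma dotvv_ge0 v : 0 <= dotv v v.
Proof. by apply: sumr_ge0 => i _; rewrite -expr2 sqr_ge0. Qed.

Lemma dotvv_eq0 v : (dotv v v == 0) = (v == 0).
Proof.
apply/idP/eqP => [|->]; last by rewrite dotv0r.
rewrite /dotv psumr_eq0 => [/allP v0|i _]; last by rewrite -expr2 sqr_ge0.
apply/rowP => i; have := v0 i (mem_index_enum _).
by rewrite -expr2 sqrf_eq0 mxE => /eqP.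
Qed.

Lemma dotvv_gt0 v : v != 0 -> 0 < dotv v v.
Proof. by rewrite lt0r dotvv_ge0 andbT dotvv_eq0. Qed.

Lemma enorm_ge0 v : 0 <= enorm v.
Proof. exact: sqrtr_ge0. Qed.

Lemma enorm_sqr v : enorm v ^+ 2 = dotv v v.
Proof. by rewrite sqr_sqrtr // dotvv_ge0. Qed.

Lemma enorm_gt0 v : v != 0 -> 0 < enorm v.
Proof. by move=> v0; rewrite sqrtr_gt0 dotvv_gt0. Qed.

Lemma enormZ a v : enorm (a *: v) = `|a| * enorm v.
Proof. by rewrite /enorm dotvZl dotvZr mulrA -expr2 sqrtrM ?sqr_ge0 // sqrtr_sqr. Qed.

Lemma enorm_normalize v : v != 0 -> enorm ((enorm v)^-1 *: v) = 1.
Proof.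
move=> v0; have nv := enorm_gt0 v0.
by rewrite enormZ ger0_norm ?invr_ge0 ?ltW // mulVf ?gt_eqF.
Qed.

Lemma dotvv_unit v : enorm v = 1 -> dotv v v = 1.
Proof. by move=> h; rewrite -enorm_sqr h expr1n. Qed.

End InnerProduct.

Section ConvexBody.
Context {R : realType} {k : nat} (K : set 'rV[R]_k).
Hypotheses (convexK : convex_set_of K) (K0 : interior K 0).

Lemma interior_scale y t : K y -> 0 <= t < 1 -> interior K (t *: y).
Proof.
move: K0 => /nbhs_ballP [e e0 eK] Ky /andP [t0 t1].
have t1' : 0 < 1 - t by rewrite subr_gt0.
apply/nbhs_ballP; exists ((1 - t) * e); first exact: mulr_gt0.
move=> z; rewrite -ball_normE /= => hz.
set w := (1 - t)^-1 *: (z - t *: y).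
have Kw : K w.
  apply: eK; rewrite -ball_normE /= /w sub0r normrN normrZ.
  by rewrite ger0_norm ?invr_ge0 ?ltW // (distrC z) ltr_pdivrMl // mulrC.
have -> : z = t *: y + (1 - t) *: w.
  by rewrite /w scalerA mulfV ?gt_eqF // scale1r addrC subrK.
by apply: convexK => //; rewrite t0 ltW.
Qed.

Lemma support_value_gt0 N s :
  N != 0 -> (forall y, K y -> dotv N y <= s) -> 0 < s.
Proof.
move: K0 => /nbhs_ballP [e e0 eK] N0 hN.
have N1 : 0 < `|N| + 1 by rewrite ltr_wpDl.
pose d := e / (`|N| + 1).
have d0 : 0 < d by rewrite divr_gt0.
have Kd : K (d *: N).
  apply: eK; rewrite -ball_normE /= sub0r normrN normrZ gtr0_norm //.
  by rewrite /d mulrAC ltr_pdivrMr // ltr_pM2l // ltrDl.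
by apply: lt_le_trans (hN _ Kd); rewrite dotvZr mulr_gt0 // dotvv_gt0.
Qed.

End ConvexBody.

Section RadialFunction.
Context {R : realType} {n : nat} (K : set 'rV[R]_n.+1) (rho : 'rV[R]_n.+1 -> R).
Hypotheses (convexK : convex_set_of K) (K0 : interior K 0).
Hypothesis radial_rho : is_radial_function K rho.

Lemma radial_gt0 x : unit_sphere R n x -> 0 < rho x.
Proof.
move=> ux; have [rho_ge0 [_ notK0]] := radial_rho ux.
rewrite lt0r rho_ge0 andbT; apply: contraPN notK0 => /eqP ->.
by rewrite scale0r.
Qed.

Lemma radial_mem x : closed K -> unit_sphere R n x -> K (rho x *: x).
Proof. by move=> /closure_id -> ux; have [_ []] := radial_rho ux. Qed.

Lemma enorm_le_radial y :
  K y -> y != 0 -> enorm y <= rho ((enorm y)^-1 *: y).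
Proof.
move=> Ky y0; have ny := enorm_gt0 y0.
set x := _ *: y; have ux : unit_sphere R n x := enorm_normalize y0.
rewrite leNgt; apply/negP => lt_rho; have [_ [_ notK]] := radial_rho ux.
apply: notK; rewrite /x scalerA; apply: interior_scale => //.
by rewrite divr_ge0 ?ltW ?radial_gt0 //= ltr_pdivrMr // mul1r.
Qed.

Lemma dotv_le_of_radial M c : 0 <= c ->
  (forall z, unit_sphere R n z -> rho z * dotv M z <= c) ->
  forall y, K y -> dotv M y <= c.
Proof.
move=> c0 hM y Ky; have [->|y0] := eqVneq y 0; first by rewrite dotv0r.
have ny := enorm_gt0 y0.
set z := (enorm y)^-1 *: y.
have uz : unit_sphere R n z := enorm_normalize y0.
have -> : y = enorm y *: z by rewrite /z scalerA mulfV ?gt_eqF // scale1r.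
rewrite dotvZr; have [Mz_le0|Mz_gt0] := leP (dotv M z) 0.
  by apply: le_trans c0; rewrite mulr_ge0_le0 ?enorm_ge0.
apply: le_trans (hM z uz); rewrite ler_pM2r //; exact: enorm_le_radial.
Qed.

End RadialFunction.

Definition subgrad_of {R : realType} {k : nat} (r : R) (x N : 'rV[R]_k) : 'rV[R]_k :=
  r *: x - (r / dotv N x) *: N.

Section NormalSubgradient.
Context {R : realType} {k : nat} (x : 'rV[R]_k) (r : R).
Hypotheses (unit_x : dotv x x = 1) (r_gt0 : 0 < r).

Lemma dotv_orthD_x v : dotv v x = 0 -> dotv (- v + r *: x) x = r.
Proof. by move=> vx; rewrite dotvDl dotvNl dotvZl vx unit_x oppr0 add0r mulr1. Qed.

Lemma enorm_orthD v :
  dotv v x = 0 -> enorm (- v + r *: x) = Num.sqrt (enorm v ^+ 2 + r ^+ 2).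
Proof.
move=> vx; rewrite /enorm enorm_sqr dotvDr dotvZr dotv_orthD_x // dotvNr.
by rewrite dotvDl dotvNl dotvZl (dotvC x v) vx; congr Num.sqrt; ring.
Qed.

Lemma normalizer_gt0 (v : 'rV[R]_k) : 0 < Num.sqrt (enorm v ^+ 2 + r ^+ 2).
Proof. by rewrite sqrtr_gt0 ltr_wpDl ?sqr_ge0 ?exprn_gt0. Qed.

Lemma enorm_normal_of v : dotv v x = 0 -> enorm (normal_of r x v) = 1.
Proof.
move=> vx; have q_gt0 := normalizer_gt0 v.
by rewrite enormZ enorm_orthD // ger0_norm ?invr_ge0 ?ltW // mulVf ?gt_eqF.
Qed.

Lemma normal_ofK v : dotv v x = 0 -> subgrad_of r x (normal_of r x v) = v.
Proof.
move=> vx; have q_gt0 := normalizer_gt0 v; rewrite /subgrad_of /normal_of.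
set q := Num.sqrt _ in q_gt0 *.
rewrite dotvZl dotv_orthD_x // scalerA.
have -> : r / (q^-1 * r) * q^-1 = 1 by field; rewrite !gt_eqF.
by rewrite scale1r opprD opprK addrCA subrr addr0.
Qed.

Lemma subgrad_of_orth N : dotv N x != 0 -> dotv (subgrad_of r x N) x = 0.
Proof.
by move=> Nx; rewrite dotvDl dotvNl !dotvZl unit_x mulr1 divfK // subrr.
Qed.

Lemma subgrad_ofK N :
  enorm N = 1 -> 0 < dotv N x -> normal_of r x (subgrad_of r x N) = N.
Proof.
move=> N1 Nx; have Nx0 : dotv N x != 0 by rewrite gt_eqF.
have rN_gt0 : 0 < r / dotv N x by rewrite divr_gt0.
rewrite /normal_of -enorm_orthD ?subgrad_of_orth // /subgrad_of opprB subrK.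
by rewrite enormZ N1 mulr1 gtr0_norm // scalerA mulVf ?gt_eqF // scale1r.
Qed.

End NormalSubgradient.

Section GaussMap.
Context {R : realType} {n : nat} (K : set 'rV[R]_n.+1) (rho : 'rV[R]_n.+1 -> R).
Hypotheses (convexK : convex_set_of K) (K0 : interior K 0).
Hypothesis radial_rho : is_radial_function K rho.
Variable x : 'rV[R]_n.+1.
Hypothesis unit_x : unit_sphere R n x.

Let dotv_xx : dotv x x = 1 := dotvv_unit unit_x.
Let rho_x_gt0 : 0 < rho x := radial_gt0 K0 radial_rho unit_x.

Lemma gauss_map_dotv_gt0 N : gauss_map K rho x N -> 0 < dotv N x.
Proof.
move=> [N1 supN]; have N0 : N != 0.
  by apply: contra_eqN N1 => /eqP ->; rewrite /enorm dotv0r sqrtr0 eq_sym oner_eq0.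
by have := support_value_gt0 K0 N0 supN; rewrite dotvZr pmulr_rgt0.
Qed.

Lemma gauss_map_normal_of v :
  subdiff rho x v -> gauss_map K rho x (normal_of (rho x) x v).
Proof.
move=> [vx subv]; have q_gt0 := normalizer_gt0 rho_x_gt0 v.
split; first exact: enorm_normal_of.
move=> y Ky; rewrite !dotvZl dotvZr dotv_orthD_x // ler_pM2l ?invr_gt0 // -expr2.
exact: (dotv_le_of_radial convexK K0 radial_rho (sqr_ge0 _) subv).
Qed.

Lemma subdiff_subgrad_of N :
  closed K -> gauss_map K rho x N -> subdiff rho x (subgrad_of (rho x) x N).
Proof.
move=> clK gN; have Nx_gt0 := gauss_map_dotv_gt0 gN; have [_ supN] := gN.
split; first by rewrite subgrad_of_orth ?gt_eqF.
move=> z uz; rewrite /subgrad_of opprB subrK dotvZl mulrCA -dotvZr.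
have rN_ge0 : 0 <= rho x / dotv N x by rewrite divr_ge0 ?ltW.
apply: le_trans (ler_wpM2l rN_ge0 (supN _ (radial_mem radial_rho clK uz))) _.
by rewrite dotvZr mulrCA divfK ?gt_eqF // expr2.
Qed.

Lemma gauss_map_subgrad_ofK N :
  gauss_map K rho x N -> normal_of (rho x) x (subgrad_of (rho x) x N) = N.
Proof.
by move=> gN; have [N1 _] := gN; rewrite subgrad_ofK // gauss_map_dotv_gt0.
Qed.

End GaussMap.

Theorem corollary10 (R : realType) (n : nat) (hn : (1 <= n)%N)
  (K : set 'rV[R]_(n.+1)) (rho : 'rV[R]_(n.+1) -> R) :
  convex_body0 K -> is_radial_function K rho ->
  forall x, unit_sphere R n x ->
    (forall N, gauss_map K rho x N ->
       exists! v, subdiff rho x v /\ N = normal_of (rho x) x v) /\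
    gauss_map K rho x = [set normal_of (rho x) x v | v in subdiff rho x].
Proof.
move=> [compactK [convexK K0]] radial_rho x unit_x.
have clK := compact_closed (@norm_hausdorff _ _) compactK.
have subdiff_subgrad N (gN : gauss_map K rho x N) :=
  subdiff_subgrad_of K0 radial_rho unit_x clK gN.
have subgradK N (gN : gauss_map K rho x N) := gauss_map_subgrad_ofK K0 radial_rho unit_x gN.
split=> [N gN|].
  exists (subgrad_of (rho x) x N); split.
    by split; [exact: subdiff_subgrad | rewrite subgradK].
  have rho_x_gt0 := radial_gt0 K0 radial_rho unit_x.
  by move=> v [[vx _] ->]; rewrite normal_ofK ?dotvv_unit.
rewrite eqEsubset; split=> [N gN|_ [v subv <-]]; last exact: gauss_map_normal_of.
by exists (subgrad_of (rho x) x N); [exact: subdiff_subgrad | rewrite subgradK].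
Qed.
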